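(* For any edge-coloured digraph $G$, the number $P(G,p)$ of proper vertex-colourings of $G$ using colours from $[p]=\{1,\dots,p\}$ is a polynomial in $p$.
   Context: An edge-coloured digraph is a finite simple digraph $G$ (no loops; for distinct vertices $a,b$ at most one edge from $a$ to $b$) in which every edge is of one of three types: dashed ($a\dashrightarrow b$), solid ($a\rightarrow b$) or double ($a\Rightarrow b$). A proper vertex-colouring with colours in $[p]$ is a function $\kappa:V(G)\to[p]$ such that for each edge $(a,b)$: $\kappa(a)\ne\kappa(b)$ if dashed, $\kappa(a)<\kappa(b)$ if solid, $\kappa(a)\le\kappa(b)$ if double. *)

From mathcomp Require Import all_boot all_order all_algebra.
Set Implicit Arguments. Unset Strict Implicit. Unset Printing Implicit Defensive.

Inductive edge_kind := Dashed | Solid | Double.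

Record ecdigraph (V : finType) := ECDigraph {
  edges : V -> V -> option edge_kind;
  no_loops : forall a, edges a a = None
}.

(* Colours in [p] = {1,...,p} are represented by 'I_p = {0,...,p-1}
   (an order-preserving shift by one). *)
Definition edge_ok (k : edge_kind) (x y : nat) : bool :=
  match k with
  | Dashed => x != y
  | Solid => x < y
  | Double => x <= y
  end.

Definition proper_colouring (V : finType) (G : ecdigraph V) (p : nat)
    (kappa : {ffun V -> 'I_p}) : bool :=
  [forall a, forall b,
     if edges G a b is Some k then edge_ok k (kappa a) (kappa b) else true].

Definition nb_colourings (V : finType) (G : ecdigraph V) (p : nat) : nat :=
  #|[set kappa : {ffun V -> 'I_p} | proper_colouring G kappa]|.

From mathcomp Require Import all_boot all_order all_algebra.
From mathcomp Require Import zify.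
Set Implicit Arguments. Unset Strict Implicit. Unset Printing Implicit Defensive.
Import GRing.Theory Num.Theory.

(* Let N(A, p) count the proper colourings of the subgraph induced on A with
   colours below p.  A colouring of A with colours below p + 1 is the same as
   the set T of vertices receiving the top colour p, which must be compatible
   with the edges leaving it, together with a colouring of A \ T with colours
   below p.  Hence N(A, p + 1) = N(A, p) + sum_(T <> 0) N(A \ T, p), and by
   induction on |A| each N(A, .) is a combination of the binomial coefficients
   C(p, k), k <= |A|, since discrete antiderivatives of such combinations are
   again such combinations.  Each C(p, k) is a polynomial in p over Q. *)

Definition bincomb (n : nat) (f : nat -> nat) :=
  exists c : nat -> nat, forall p, f p = \sum_(k < n) c k * 'C(p, k).

Lemma bincomb_widen m n f : m <= n -> bincomb m f -> bincomb n f.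
Proof.
move=> le_mn [c Hf]; exists (fun k => if k < m then c k else 0) => p.
rewrite Hf (big_ord_widen n (fun k => c k * 'C(p, k))) //.
rewrite [RHS](bigID (fun k : 'I_n => k < m)) /= [X in _ = _ + X]big1 ?addn0.
  by apply: eq_bigr => k ->.
by move=> k /negbTE ->.
Qed.

Lemma bincomb_sum (I : Type) (s : seq I) (P : pred I) n (F : I -> nat -> nat) :
  (forall i, P i -> bincomb n (F i)) ->
  bincomb n (fun p => \sum_(i <- s | P i) F i p).
Proof.
move=> HF; elim: s => [|i s [c IH]].
  by exists (fun _ => 0) => p; rewrite big_nil big1.
case Pi: (P i); last by exists c => p; rewrite big_cons Pi IH.
have [d Hd] := HF i Pi; exists (fun k => d k + c k) => p.
by rewrite big_cons Pi Hd IH -big_split; apply: eq_bigr => k _; rewrite mulnDl.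
Qed.

Lemma bincomb_antidiff n f g :
  bincomb n g -> (forall p, f p.+1 = f p + g p) -> bincomb n.+1 f.
Proof.
move=> [c Hg] Hf; exists (fun k => if k is k'.+1 then c k' else f 0).
elim=> [|p IH].
  by rewrite big_ord_recl bin0 muln1 big1 ?addn0 // => k _; rewrite bin0n muln0.
rewrite Hf IH Hg !big_ord_recl !bin0 !muln1 -addnA -big_split /=.
by congr (_ + _); apply: eq_bigr => k _; rewrite /bump /= !add1n binS mulnDr.
Qed.

Section BinomialPolynomial.
Local Open Scope ring_scope.
Variable R : numFieldType.

Definition binpoly (k : nat) : {poly R} :=
  (k`!%:R)^-1 *: \prod_(i < k) ('X - i%:R%:P).

Lemma natr_ffact_prod (p k : nat) :
  (p ^_ k)%:R = \prod_(i < k) ((p%:R : R) - i%:R).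
Proof.
have [le_kp | lt_pk] := leqP k p.
  rewrite ffact_prod natr_prod; apply: eq_bigr => i _.
  by rewrite natrB // ltnW // (leq_trans (ltn_ord i)).
by rewrite ffact_small // (bigD1 (Ordinal lt_pk)) //= subrr mul0r.
Qed.

Lemma horner_binpoly k p : (binpoly k).[p%:R] = 'C(p, k)%:R.
Proof.
rewrite hornerZ horner_prod.
under eq_bigr => i _ do rewrite hornerXsubC.
by rewrite -natr_ffact_prod -bin_ffact natrM mulrC mulfK // pnatr_eq0 -lt0n fact_gt0.
Qed.

Lemma bincomb_poly n f :
  bincomb n f -> exists P : {poly R}, forall p : nat, (f p)%:R = P.[p%:R].
Proof.
move=> [c Hf]; exists (\sum_(k < n) (c k)%:R *: binpoly k) => p.
rewrite Hf natr_sum horner_sum; apply: eq_bigr => k _.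
by rewrite hornerZ horner_binpoly natrM.
Qed.

End BinomialPolynomial.

Lemma edge_ok_lt k x y : x < y -> edge_ok k x y.
Proof. by move=> lt_xy; case: k => /=; [rewrite ltn_eqF | | exact: ltnW]. Qed.

Lemma edge_ok_order k x y x' y' :
  (x < y) = (x' < y') -> (y < x) = (y' < x') -> edge_ok k x y = edge_ok k x' y'.
Proof.
move=> lt_xy lt_yx; case: k => //=; first by rewrite !neq_ltn lt_xy lt_yx.
by rewrite leqNgt [x' <= _]leqNgt lt_yx.
Qed.

Section ColouringsOfSubsets.
Variables (V : finType) (G : ecdigraph V).

Definition arc_ok (a b : V) (x y : nat) :=
  if edges G a b is Some k then edge_ok k x y else true.

Lemma arc_ok_lt a b x y : x < y -> arc_ok a b x y.
Proof. by rewrite /arc_ok; case: (edges G a b) => // k; apply: edge_ok_lt. Qed.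

Lemma arc_ok_order a b x y x' y' :
  (x < y) = (x' < y') -> (y < x) = (y' < x') -> arc_ok a b x y = arc_ok a b x' y'.
Proof. by rewrite /arc_ok; case: (edges G a b) => // k; apply: edge_ok_order. Qed.

(* The vertices outside A carry the dummy colour p, so that colourings of
   different subsets live in the same finite type. *)
Definition colouring_on (A : {set V}) p (f : {ffun V -> 'I_p.+1}) :=
  [forall v, (v \in A) == (f v < p)] &&
  [forall a in A, forall b in A, arc_ok a b (f a) (f b)].

Definition nb_colourings_on (A : {set V}) p :=
  #|[set f : {ffun V -> 'I_p.+1} | colouring_on A f]|.

(* T can be the class of the largest colour of a colouring of A: the colours
   1 and (b \in T) are in the order such a colouring gives to a \in T and b. *)
Definition top_class (A T : {set V}) :=
  (T \subset A) && [forall a in T, forall b in A, arc_ok a b 1 (b \in T)].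

Lemma colouring_onP (A : {set V}) p (f : {ffun V -> 'I_p.+1}) : reflect
  ((forall v, (v \in A) = (f v < p)) /\
   {in A &, forall a b, arc_ok a b (f a) (f b)})
  (colouring_on A f).
Proof.
apply: (iffP andP) => [[/forallP dom /forall_inP arcs]|[dom arcs]]; split.
- by move=> v; apply/eqP.
- by move=> a b aA; have /forall_inP := arcs a aA; apply.
- by apply/forallP => v; rewrite dom.
- by apply/forall_inP => a aA; apply/forall_inP => b; apply: arcs.
Qed.

Lemma top_classP (A T : {set V}) : reflect
  (T \subset A /\ {in T & A, forall a b, arc_ok a b 1 (b \in T)})
  (top_class A T).
Proof.
apply: (iffP andP) => [[TA /forall_inP top]|[TA top]]; split=> //.
  by move=> a b aT; have /forall_inP := top a aT; apply.
by apply/forall_inP => a aT; apply/forall_inP => b; apply: top.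
Qed.

Lemma top_class0 (A : {set V}) : top_class A set0.
Proof. by apply/top_classP; rewrite sub0set; split=> // a b; rewrite inE. Qed.

Definition top_set p (f : {ffun V -> 'I_p.+2}) := [set v | f v == p :> nat].

Definition drop_top p (f : {ffun V -> 'I_p.+2}) : {ffun V -> 'I_p.+1} :=
  [ffun v => inord (minn (f v) p)].

Definition add_top p (T : {set V}) (g : {ffun V -> 'I_p.+1}) : {ffun V -> 'I_p.+2} :=
  [ffun v => inord (if v \in T then p else if g v == p :> nat then p.+1 else g v)].

Lemma drop_topE p (f : {ffun V -> 'I_p.+2}) v : drop_top f v = minn (f v) p :> nat.
Proof. by rewrite ffunE inordK // ltnS geq_minr. Qed.

Lemma add_topE p (T : {set V}) (g : {ffun V -> 'I_p.+1}) v : add_top T g v =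
  (if v \in T then p else if g v == p :> nat then p.+1 else g v) :> nat.
Proof.
rewrite ffunE inordK //; have := ltn_ord (g v).
by case: ifP => _; [lia | case: eqP; lia].
Qed.

Lemma add_top_drop p (f : {ffun V -> 'I_p.+2}) : add_top (top_set f) (drop_top f) = f.
Proof.
apply/ffunP => v; apply/val_inj => /=; rewrite add_topE drop_topE inE.
by have := ltn_ord (f v); case: eqP => [-> //|ne_fp] lt_f; case: eqP; lia.
Qed.

Lemma drop_add_top (A T : {set V}) p (g : {ffun V -> 'I_p.+1}) :
  colouring_on (A :\: T) g -> drop_top (add_top T g) = g.
Proof.
move=> /colouring_onP [dom _]; apply/ffunP => v; apply/val_inj => /=.
rewrite drop_topE add_topE; have := ltn_ord (g v); have := dom v; rewrite !inE.
by case: (v \in T) => /=; [lia | case: eqP; lia].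
Qed.

Lemma top_set_add_top p (T : {set V}) (g : {ffun V -> 'I_p.+1}) : top_set (add_top T g) = T.
Proof.
apply/setP => v; rewrite inE add_topE; case: (v \in T); first by rewrite eqxx.
by case: ifP => // _; rewrite gtn_eqF.
Qed.

Lemma colouring_on_drop_top (A : {set V}) p (f : {ffun V -> 'I_p.+2}) :
  colouring_on A f -> colouring_on (A :\: top_set f) (drop_top f).
Proof.
move=> /colouring_onP [dom arcs]; apply/colouring_onP; split=> [v | a b].
  by rewrite !inE dom drop_topE; have := ltn_ord (f v); case: eqP; lia.
have drop_below v : v \in A -> f v != p :> nat -> drop_top f v = f v :> nat.
  by rewrite dom drop_topE => lt_fv ne_fv; apply/minn_idPl; lia.
by rewrite !inE => /andP [ne_ap aA] /andP [ne_bp bA]; rewrite !drop_below //; apply: arcs.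
Qed.

Lemma colouring_on_add_top (A T : {set V}) p (g : {ffun V -> 'I_p.+1}) :
  top_class A T -> colouring_on (A :\: T) g -> colouring_on A (add_top T g).
Proof.
move=> /top_classP [/subsetP TA top] /colouring_onP [dom arcs].
have below v : v \in A -> v \notin T -> g v < p by move=> vA vT; rewrite -dom !inE vT.
have add_top_in v : v \in A -> add_top T g v = (if v \in T then p else g v) :> nat.
  by move=> vA; rewrite add_topE; case: ifPn => // /(below v vA) /ltn_eqF ->.
apply/colouring_onP; split=> [v | a b aA bA].
  rewrite add_topE; case: ifPn => [/TA -> | vT]; first by rewrite ltnSn.
  by have := dom v; rewrite !inE vT /= => ->; have := ltn_ord (g v); case: eqP; lia.
rewrite !add_top_in //; case: ifPn => aT; case: ifPn => bT.
- have := top a b aT bA; rewrite bT.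
  by rewrite (arc_ok_order _ _ (x' := p) (y' := p)) ?ltnn.
- have := top a b aT bA; rewrite (negbTE bT); have := below b bA bT.
  by move=> lt_bp; rewrite (arc_ok_order _ _ (x' := p) (y' := g b)) //; lia.
- by apply: arc_ok_lt; apply: below.
- by apply: arcs; rewrite !inE ?aT ?bT.
Qed.

Lemma top_class_top_set (A : {set V}) p (f : {ffun V -> 'I_p.+2}) :
  colouring_on A f -> top_class A (top_set f).
Proof.
move=> /colouring_onP [dom arcs]; have top_in v : v \in top_set f -> v \in A.
  by rewrite inE dom => /eqP ->.
apply/top_classP; split=> [|a b aT bA]; first by apply/subsetP.
have /eqP fa : f a == p :> nat by rewrite inE in aT.
have le_fb : f b <= p by rewrite -ltnS -dom.
rewrite (arc_ok_order _ _ (x' := f a) (y' := f b)); first exact: arcs (top_in a aT) bA.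
all: by rewrite inE fa; case: eqP => /=; lia.
Qed.

Lemma card_top_fibre (A T : {set V}) p :
  #|[set f : {ffun V -> 'I_p.+2} | colouring_on A f & top_set f == T]| =
  if top_class A T then nb_colourings_on (A :\: T) p else 0.
Proof.
have [topT | ntopT] := boolP (top_class A T); last first.
  apply/eqP; rewrite cards_eq0; apply/eqP/setP => f; rewrite !inE.
  by apply/negbTE/andP => -[/top_class_top_set + /eqP fT]; rewrite fT; exact/negP.
rewrite /nb_colourings_on -(@card_in_imset _ _ (@add_top p T)); last first.
  by move=> g1 g2; rewrite !inE => c1 c2 e; rewrite -(drop_add_top c1) -(drop_add_top c2) e.
apply: eq_card => f; rewrite inE; apply/andP/imsetP => [[cf /eqP fT] | [g]].
  exists (drop_top f); first by rewrite inE -fT colouring_on_drop_top.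
  by rewrite -fT add_top_drop.
by rewrite inE => cg ->; rewrite colouring_on_add_top // top_set_add_top eqxx.
Qed.

Lemma nb_colourings_on_rec (A : {set V}) p :
  nb_colourings_on A p.+1 = \sum_(T | top_class A T) nb_colourings_on (A :\: T) p.
Proof.
rewrite {1}/nb_colourings_on -sum1_card (partition_big (@top_set p) xpredT) //=.
rewrite [RHS]big_mkcond; apply: eq_bigr => T _.
by rewrite -card_top_fibre -sum1_card; apply: eq_bigl => f; rewrite !inE.
Qed.

Lemma bincomb_nb_colourings_on (A : {set V}) :
  bincomb #|A|.+1 (nb_colourings_on A).
Proof.
have [n] := ubnP #|A|; elim: n A => // n IH A lt_An.
pose F p := \sum_(T | top_class A T && (T != set0)) nb_colourings_on (A :\: T) p.
apply: (@bincomb_antidiff _ _ F) => [|p]; last first.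
  by rewrite nb_colourings_on_rec (bigD1 set0) ?top_class0 //= setD0.
apply: bincomb_sum => T /andP [/top_classP [TA _] T0].
have lt_AT : #|A :\: T| < #|A|.
  rewrite cardsD (setIidPr TA); have := subset_leq_card TA.
  by rewrite -card_gt0 in T0; lia.
by apply: (bincomb_widen _ (IH _ _)) => //; lia.
Qed.

Lemma nb_colourings_setT p : nb_colourings G p = nb_colourings_on [set: V] p.
Proof.
pose widen (f : {ffun V -> 'I_p}) : {ffun V -> 'I_p.+1} :=
  [ffun v => widen_ord (leqnSn p) (f v)].
rewrite /nb_colourings /nb_colourings_on -(@card_in_imset _ _ widen); last first.
  move=> f1 f2 _ _ /ffunP e; apply/ffunP => v; apply/val_inj.
  by have := congr1 val (e v); rewrite !ffunE.
apply: eq_card => g; rewrite inE; apply/imsetP/colouring_onP => [[f] | [dom arcs]].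
  rewrite inE => /forallP proper_f ->; split=> [v | a b _ _]; first by rewrite inE ffunE /= ltn_ord.
  by have /forallP := proper_f a; move/(_ b); rewrite /arc_ok !ffunE.
have lt_gp v : g v < p by rewrite -dom inE.
exists [ffun v => Ordinal (lt_gp v)]; last by apply/ffunP => v; apply/val_inj; rewrite !ffunE.
rewrite inE; apply/forallP => a; apply/forallP => b.
by have := arcs a b (in_setT a) (in_setT b); rewrite /arc_ok !ffunE.
Qed.

End ColouringsOfSubsets.

Theorem mainTheorem5 (V : finType) (G : ecdigraph V) :
  exists P : {poly rat}, forall p : nat,
    ((nb_colourings G p)%:R = P.[p%:R])%R.
Proof.
have [P HP] := bincomb_poly rat (bincomb_nb_colourings_on G [set: V]).
by exists P => p; rewrite nb_colourings_setT.
Qed.
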